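(* Let $G(\vec x,\vec y)$ be a propositional formula over Boolean variables $\vec x=(x_0,\dots,x_{m-1})$ and $\vec y=(y_0,\dots,y_{n-1})$, and let $\psi \equiv \exists \vec x.\,\forall \vec y.\, G(\vec x,\vec y)$. Let $\mathit{enc}:\mathbb{B}^m\to[0,2^m-1]$ be the standard binary encoding with $x_0$ the lowest-order bit, and for $\vec x \neq \top^m$ (the all-true vector) let $\mathit{succ}(\vec x)$ be the unique vector with $\mathit{enc}(\mathit{succ}(\vec x)) = \mathit{enc}(\vec x)+1$. Consider the transition system with state space $\mathbb{B}^m\times\mathbb{B}$ (states $(\vec x,o)$), initial condition $I \equiv (\vec x=\bot^m \land o=\bot)$, and transition relation $$\tau(\vec x,o,\vec x',o') \equiv \Big(\lnot(\forall \vec y.\,G(\vec x,\vec y)) \land \big((\vec x\neq\top^m \land \vec x'=\mathit{succ}(\vec x)\land o'=o)\lor(\vec x=\top^m\land o'=\top)\big)\Big) \lor \big(\vec x'=\vec x\land o'=o\big).$$ Then there exists an inductive invariant $R\subseteq \mathbb{B}^m\times\mathbb{B}$ of this system with $R\neq \mathbb{B}^m\times\mathbb{B}$ if and only if $\psi$ is true. *)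

From HB Require Import structures.
From mathcomp Require Import all_boot.
Set Implicit Arguments. Unset Strict Implicit. Unset Printing Implicit Defensive.

Inductive form (m n : nat) : Type :=
  | FX of 'I_m
  | FY of 'I_n
  | FTrue
  | FFalse
  | FNot of form m n
  | FAnd of form m n & form m n
  | FOr of form m n & form m n.

Fixpoint eval m n (G : form m n) (x : {ffun 'I_m -> bool}) (y : {ffun 'I_n -> bool}) : bool :=
  match G with
  | FX i => x i
  | FY j => y j
  | FTrue => true
  | FFalse => false
  | FNot g => ~~ eval g x y
  | FAnd g h => eval g x y && eval h x y
  | FOr g h => eval g x y || eval h x y
  end.

Definition enc m (x : {ffun 'I_m -> bool}) : nat := \sum_(i < m) (x i) * 2 ^ i.

Definition allT m (x : {ffun 'I_m -> bool}) : bool := [forall i, x i].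

Definition forallY m n (G : form m n) (x : {ffun 'I_m -> bool}) : bool :=
  [forall y : {ffun 'I_n -> bool}, eval G x y].

Definition state (m : nat) : finType := ({ffun 'I_m -> bool} * bool)%type.

Definition init m (s : state m) : Prop := s.1 = [ffun => false] /\ s.2 = false.

(* x' = succ x is written as enc x' = enc x + 1 (succ x is the unique such vector). *)
Definition tau m n (G : form m n) (s s' : state m) : Prop :=
  (~~ forallY G s.1 /\
     ((~~ allT s.1 /\ enc s'.1 = enc s.1 + 1 /\ s'.2 = s.2) \/
      (allT s.1 /\ s'.2 = true)))
  \/ (s'.1 = s.1 /\ s'.2 = s.2).

Definition inductive_invariant m n (G : form m n) (R : {set state m}) : Prop :=
  (forall s, init s -> s \in R) /\
  (forall s s', s \in R -> tau G s s' -> s' \in R).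

From Pilot Require Import Defs.
From HB Require Import structures.
From mathcomp Require Import all_boot.
From mathcomp Require Import zify.
Set Implicit Arguments. Unset Strict Implicit. Unset Printing Implicit Defensive.

(* If no x satisfies forall y. G(x, y), the guard of tau is always open, so the
   counter walks through every x with o = false and then sets o at the all-true
   vector: every inductive invariant is the whole state space.  Conversely, for
   a witness x0 the counter gets stuck at x0, and the states (x, false) with
   enc x <= enc x0 form a proper inductive invariant. *)

Lemma enc_recl m (x : {ffun 'I_m.+1 -> bool}) :
  enc x = x ord0 + 2 * enc [ffun i : 'I_m => x (lift ord0 i)].
Proof.
rewrite /enc big_ord_recl expn0 muln1 big_distrr /=; congr (_ + _).
by apply: eq_bigr => i _; rewrite ffunE /= expnS; lia.
Qed.

Lemma enc_inj m : injective (@enc m).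
Proof.
elim: m => [|m IH] x y; first by move=> _; apply/ffunP => -[].
rewrite (enc_recl x) (enc_recl y) => Exy.
have x0E : x ord0 = y ord0.
  by move: Exy; case: (x ord0); case: (y ord0) => //; lia.
have /IH/ffunP tailE : enc [ffun i : 'I_m => x (lift ord0 i)] =
                       enc [ffun i : 'I_m => y (lift ord0 i)].
  by rewrite x0E in Exy; lia.
apply/ffunP => i; case: (unliftP ord0 i) => [j ->|->] //.
by have := tailE j; rewrite !ffunE.
Qed.

Lemma enc_ltn m (x : {ffun 'I_m -> bool}) : enc x < 2 ^ m.
Proof.
elim: m x => [|m IH] x; first by rewrite /enc big_ord0.
rewrite enc_recl expnS; have := IH [ffun i : 'I_m => x (lift ord0 i)].
by case: (x ord0) => /=; lia.
Qed.

Lemma enc_surj m k : k < 2 ^ m -> exists x : {ffun 'I_m -> bool}, enc x = k.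
Proof.
elim: m k => [|m IH] k.
  rewrite expn0 ltnS leqn0 => /eqP ->.
  by exists [ffun => false]; rewrite /enc big_ord0.
move=> k_lt; have [x xE] : exists x : {ffun 'I_m -> bool}, enc x = k./2.
  by apply: IH; rewrite expnS in k_lt; have := odd_double_half k; lia.
exists [ffun i => if unlift ord0 i is Some j then x j else odd k].
rewrite enc_recl ffunE unlift_none.
have -> : [ffun i : 'I_m =>
    [ffun i0 => if unlift ord0 i0 is Some j then x j else odd k] (lift ord0 i)] = x.
  by apply/ffunP => i; rewrite !ffunE liftK.
by rewrite xE; have := odd_double_half k; rewrite -addnn; lia.
Qed.

Lemma enc_false m : enc ([ffun => false] : {ffun 'I_m -> bool}) = 0.
Proof. by rewrite /enc big1 // => i _; rewrite ffunE. Qed.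

Lemma enc_le_allT m (x y : {ffun 'I_m -> bool}) : Defs.allT x -> enc y <= enc x.
Proof.
move/forallP => xT; rewrite /enc; apply: leq_sum => i _.
by rewrite xT; case: (y i); rewrite ?mul1n ?mul0n.
Qed.

Lemma allT_true m : Defs.allT ([ffun => true] : {ffun 'I_m -> bool}).
Proof. by apply/forallP => i; rewrite ffunE. Qed.

Section CounterSystem.

Variables (m n : nat) (G : form m n).

Section NoWitness.

Hypothesis no_witness : forall x, ~~ forallY G x.
Variable R : {set state m}.
Hypothesis R_inv : inductive_invariant G R.

Lemma invariant_counter_states (x : {ffun 'I_m -> bool}) : (x, false) \in R.
Proof.
case: R_inv => R_init R_step.
move: {2}(enc x) (erefl (enc x)) => k; elim: k x => [|k IH] x xE.
  by apply: R_init; split => //=; apply: enc_inj; rewrite xE enc_false.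
have [x_pred predE] : exists x_pred : {ffun 'I_m -> bool}, enc x_pred = k.
  by apply: enc_surj; have := enc_ltn x; lia.
apply: (R_step (x_pred, false)); first exact: IH.
left; split; first exact: no_witness.
left; split => //=; last by rewrite xE predE addn1.
by apply/negP => /(enc_le_allT x); lia.
Qed.

Lemma invariant_setT : R = [set: state m].
Proof.
apply/setP => -[x o]; rewrite inE; case: o; last exact: invariant_counter_states.
apply: (R_inv.2 ([ffun => true], false)); first exact: invariant_counter_states.
by left; split; [exact: no_witness | right; split=> //; exact: allT_true].
Qed.

End NoWitness.

Definition counter_below (x0 : {ffun 'I_m -> bool}) : {set state m} :=
  [set s : state m | ~~ s.2 && (enc s.1 <= enc x0)].

Lemma counter_below_proper x0 : counter_below x0 != [set: state m].
Proof. by apply/negP => /eqP/setP/(_ (x0, true)); rewrite !inE. Qed.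

Lemma counter_below_invariant x0 :
  forallY G x0 -> inductive_invariant G (counter_below x0).
Proof.
move=> x0_sat; split; first by move=> [x o] [/= -> ->]; rewrite inE /= enc_false.
move=> [x o] [x' o']; rewrite !inE /= => /andP [o_false x_le].
case=> [[x_unsat [[_ [x'E o'E]]|[xT _]]]|[/= -> ->]]; last by rewrite o_false x_le.
- have x_lt : enc x < enc x0.
    rewrite ltn_neqAle x_le andbT; apply/eqP => /enc_inj xE.
    by rewrite xE x0_sat in x_unsat.
  by move: o'E x'E => /= -> ->; rewrite o_false addn1.
- have xE : x = x0.
    by apply: enc_inj; apply/eqP; rewrite eqn_leq x_le enc_le_allT.
  by rewrite xE x0_sat in x_unsat.
Qed.

End CounterSystem.

Theorem mainTheorem2 (m n : nat) (G : form m n) :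
  (exists R : {set state m}, inductive_invariant G R /\ R != [set: state m]) <->
  (exists x : {ffun 'I_m -> bool}, forall y : {ffun 'I_n -> bool}, eval G x y).
Proof.
split.
- move=> [R [R_inv R_proper]].
  case: (boolP [exists x, forallY G x]) => [/existsP [x /forallP x_sat]|]; first by exists x.
  rewrite negb_exists => /forallP no_witness.
  by rewrite (invariant_setT no_witness R_inv) eqxx in R_proper.
- move=> [x0 /forallP x0_sat].
  exists (counter_below x0).
  by split; [exact: counter_below_invariant | exact: counter_below_proper].
Qed.
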